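(* Let $V$ be a finite-dimensional real vector space with a nondegenerate symmetric bilinear form $b$, and let $J\in PC(V)$ be a metric-$b$ algebraic Jacobi curvature operator. Put $G(x)=1_V-\tfrac13J(x,x)$ for $x\in V$, let $U_J=\{x\in V:G(x)\text{ invertible}\}$ (an open set containing $0$), and define $g_x(u,v)=b(G(x)u,v)$ on $U_J$. Then $g$ is a semi-Riemannian metric on $U_J$ with $g_0=b$, its Levi-Civita connection is $$(\nabla^g_uv)(x)=(D_uv)(x)+\tfrac23\,G(x)^{-1}J(u(x),v(x))x,$$ and its Riemann and Jacobi curvature operators at $0$ satisfy $\mathcal R_{\nabla^g}(0)=R_J$ and $\mathcal J_{\nabla^g}(0)=J$.
   Context: $PC(V)$: bilinear maps $V\times V\to L(V;V)$. $J$ is a metric-$b$ algebraic Jacobi curvature operator if $J(u,v)=J(v,u)$, $J(u,v)w+J(v,w)u+J(w,u)v=0$, and $b(J(u,v)w,x)=b(J(w,x)u,v)$ for all $u,v,w,x$. $D$ is ordinary differentiation of $V$-valued functions (vector fields on open subsets of $V$). Curvature: $\mathcal R_\nabla(u,v)=[\nabla_u,\nabla_v]-\nabla_{[u,v]}$; $R_J(u,v)w=\tfrac23(J(w,v)u-J(w,u)v)$; Jacobi operator $\mathcal J_\nabla(u,v)w=\tfrac12(\mathcal R_\nabla(w,v)u+\mathcal R_\nabla(w,u)v)$. *)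

From HB Require Import structures.
From mathcomp Require Import all_boot all_order all_algebra.
From mathcomp Require Import all_classical all_reals all_analysis.
Set Implicit Arguments. Unset Strict Implicit. Unset Printing Implicit Defensive.
Import Order.TTheory GRing.Theory Num.Theory.
Import numFieldNormedType.Exports.
Local Open Scope ring_scope.
Local Open Scope classical_set_scope.

(* V is modelled as the row space 'rV[R]_n.  Linear maps V -> V are matrices
   acting on the right: the image of u under A is  u *m A.
   An element J of PC(V) is a map  J : V -> V -> 'M[R]_n  (bilinear), with
   J(u,v)w := w *m J u v. *)

Section Defs.
Variables (R : realType) (n : nat).
Local Notation V := 'rV[R]_n.

Fixpoint dderiv (W : normedModType R) (vs : seq V) (f : V -> W) : V -> W :=
  match vs with
  | [::] => f
  | v :: vs' => fun x => 'D_v (dderiv vs' f) x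
  end.

Definition smooth_on (W : normedModType R) (A : set V) (f : V -> W) :=
  forall (vs : seq V) (x : V), A x -> differentiable (dderiv vs f) x.

Definition nondeg_sym_bilinear (b : V -> V -> R) :=
  [/\ forall (a : R) (u v w : V), b (a *: u + v) w = a * b u w + b v w,
      forall u v, b u v = b v u
    & forall u, (forall v, b u v = 0) -> u = 0].

Definition is_PC (J : V -> V -> 'M[R]_n) :=
  (forall (a : R) (u v w : V), J (a *: u + v) w = a *: J u w + J v w) /\
  (forall (a : R) (u v w : V), J u (a *: v + w) = a *: J u v + J u w).

Definition metric_alg_Jacobi (b : V -> V -> R) (J : V -> V -> 'M[R]_n) :=
  [/\ is_PC J,
      forall u v, J u v = J v u,
      forall u v w, w *m J u v + u *m J v w + v *m J w u = 0
    & forall u v w x, b (w *m J u v) x = b (u *m J w x) v].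

Definition Gop (J : V -> V -> 'M[R]_n) (x : V) : 'M[R]_n :=
  1%:M - (3%:R)^-1 *: J x x.

Definition UJ (J : V -> V -> 'M[R]_n) : set V := [set x | Gop J x \in unitmx].

Definition gmet (b : V -> V -> R) (J : V -> V -> 'M[R]_n) (x u v : V) : R :=
  b (u *m Gop J x) v.

Definition Dvf (u v : V -> V) (x : V) : V := 'D_(u x) v x.

Definition bracket (u v : V -> V) (x : V) : V := Dvf u v x - Dvf v u x.

Definition nablaJ (J : V -> V -> 'M[R]_n) (u v : V -> V) (x : V) : V :=
  Dvf u v x + (2%:R / 3%:R) *: ((x *m J (u x) (v x)) *m invmx (Gop J x)).

Definition Rcurv (nab : (V -> V) -> (V -> V) -> V -> V) (u v w : V -> V) (x : V) : V :=
  nab u (nab v w) x - nab v (nab u w) x - nab (bracket u v) w x.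

Definition Jcurv (nab : (V -> V) -> (V -> V) -> V -> V) (u v w : V -> V) (x : V) : V :=
  (2%:R)^-1 *: (Rcurv nab w v u x + Rcurv nab w u v x).

Definition RJ (J : V -> V -> 'M[R]_n) (u v w : V) : V :=
  (2%:R / 3%:R) *: (u *m J w v - v *m J w u).

End Defs.

From HB Require Import structures.
From mathcomp Require Import all_boot all_order all_algebra.
From mathcomp Require Import all_classical all_reals all_analysis.
From mathcomp Require Import ring lra.
Import Order.TTheory GRing.Theory Num.Theory.
Import numFieldNormedType.Exports.
Local Open Scope ring_scope.
Local Open Scope classical_set_scope.
Set Implicit Arguments. Unset Strict Implicit. Unset Printing Implicit Defensive.

(* The operator G(x) = 1 - J(x,x)/3 is self-adjoint for b, because
   b(J(x,x)u, v) = b(J(x,v)x, u) = b(J(x,x)v, u) by the symmetries of J; hence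
   g_x is a symmetric form, nondegenerate exactly where G(x) is invertible.  Its
   coefficients are polynomial in x, so g is smooth and U_J = {det G <> 0} is
   open.  The connection is torsion free because J is symmetric.  Differentiating
   g gives the term -1/3 b((J(d,x) + J(x,d))u, v) with d = u(x), and the Bianchi
   identity together with b(J(u,v)w, x) = b(J(w,x)u, v) shows that the correction
   terms of the connection produce exactly this term.  At 0 the correction term
   vanishes, with derivative 2/3 J(v(0),w(0))a in direction a; in R(u,v)w(0) the
   second derivatives of w cancel by the symmetry of second derivatives (a
   consequence of the mean value theorem), the first derivatives of u and v
   cancel against the bracket term, and what remains is R_J.  The Jacobi
   operator then follows from R_J by the Bianchi identity. *)

Section BilinearMaps.
Variables (R : pzRingType) (A C W : lmodType R) (B : A -> C -> W).
Hypothesis BDZl : forall a u v w, B (a *: u + v) w = a *: B u w + B v w.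
Hypothesis BDZr : forall a u v w, B u (a *: v + w) = a *: B u v + B u w.

Lemma bilinDl u v w : B (u + v) w = B u w + B v w.
Proof. by have := BDZl 1 u v w; rewrite !scale1r. Qed.

Lemma bilinDr u v w : B w (u + v) = B w u + B w v.
Proof. by have := BDZr 1 w u v; rewrite !scale1r. Qed.

Lemma bilin0l w : B 0 w = 0.
Proof. by apply/(addrI (B 0 w)); rewrite -bilinDl !addr0. Qed.

Lemma bilin0r u : B u 0 = 0.
Proof. by apply/(addrI (B u 0)); rewrite -bilinDr !addr0. Qed.

Lemma bilinZl a u w : B (a *: u) w = a *: B u w.
Proof. by rewrite -[a *: u]addr0 BDZl bilin0l addr0. Qed.

Lemma bilinZr a u w : B u (a *: w) = a *: B u w.
Proof. by rewrite -[a *: w]addr0 BDZr bilin0r addr0. Qed.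

Lemma bilinNl u w : B (- u) w = - B u w.
Proof. by rewrite -scaleN1r bilinZl scaleN1r. Qed.

Lemma bilinBl u v w : B (u - v) w = B u w - B v w.
Proof. by rewrite bilinDl bilinNl. Qed.

Lemma bilin_suml I (r : seq I) (P : pred I) (F : I -> A) w :
  B (\sum_(i <- r | P i) F i) w = \sum_(i <- r | P i) B (F i) w.
Proof. exact: (big_morph _ (fun u v => bilinDl u v w) (bilin0l w)). Qed.

Lemma bilin_sumr I (r : seq I) (P : pred I) (F : I -> C) u :
  B u (\sum_(i <- r | P i) F i) = \sum_(i <- r | P i) B u (F i).
Proof. exact: (big_morph _ (fun v w => bilinDr v w u) (bilin0r u)). Qed.

End BilinearMaps.

Lemma bilin_matrix_sum_delta (R : pzRingType) (p1 q1 p2 q2 : nat) (W : lmodType R)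
    (B : 'M[R]_(p1, q1) -> 'M[R]_(p2, q2) -> W) :
  (forall a u v w, B (a *: u + v) w = a *: B u w + B v w) ->
  (forall a u v w, B u (a *: v + w) = a *: B u v + B u w) ->
  forall u w, B u w = \sum_i \sum_j \sum_k \sum_l
                        (u i j * w k l) *: B (delta_mx i j) (delta_mx k l).
Proof.
move=> BDZl BDZr u w.
rewrite {1}(matrix_sum_delta u) (bilin_suml BDZl); apply: eq_bigr => i _.
rewrite (bilin_suml BDZl); apply: eq_bigr => j _.
rewrite (bilinZl BDZl) {1}(matrix_sum_delta w) (bilin_sumr BDZr) scaler_sumr.
apply: eq_bigr => k _; rewrite (bilin_sumr BDZr) scaler_sumr.
by apply: eq_bigr => l _; rewrite (bilinZr BDZr) scalerA.
Qed.

Lemma mulmxDZl (R : pzRingType) p q r (a : R) (u v : 'M[R]_(p, q)) (w : 'M[R]_(q, r)) :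
  (a *: u + v) *m w = a *: (u *m w) + v *m w.
Proof. by rewrite mulmxDl scalemxAl. Qed.

Lemma mulmxDZr (R : comPzRingType) p q r (a : R) (u : 'M[R]_(p, q)) (v w : 'M[R]_(q, r)) :
  u *m (a *: v + w) = a *: (u *m v) + u *m w.
Proof. by rewrite mulmxDr scalemxAr. Qed.

Section DirectionalDerivatives.
Variables (R : realType) (V : normedModType R).

Lemma is_derive_scalel (W : normedModType R) (r : V -> R) (c : W) x d dr :
  is_derive x d r dr -> is_derive x d (fun y => r y *: c) (dr *: c).
Proof.
move=> [dr_ex <-].
have quotient_cvg : (fun h : R => h^-1 *: (((fun y => r y *: c) \o shift x) (h *: d)
    - r x *: c)) @ 0^' --> 'D_d r x *: c.
  have -> : (fun h : R => h^-1 *: (((fun y => r y *: c) \o shift x) (h *: d) - r x *: c))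
      = (fun h : R => (h^-1 *: ((r \o shift x) (h *: d) - r x)) *: c).
    by apply/funext => h /=; rewrite -scalerBl scalerA.
  exact: cvgZr_tmp.
split; first by apply/cvg_ex; eexists; exact: quotient_cvg.
exact: cvg_lim quotient_cvg.
Qed.

Lemma is_derive_entry p q (F : V -> 'M[R]_(p, q)) x d dF i j :
  is_derive x d F dF -> is_derive x d (fun y => F y i j) (dF i j).
Proof.
move=> [dF_ex <-]; split; first by move/derivable_mxP: dF_ex; apply.
by rewrite derive_mx // mxE.
Qed.

Lemma is_derive_mx p q (F : V -> 'M[R]_(p, q)) x d (dF : 'M[R]_(p, q)) :
  (forall i j, is_derive x d (fun y => F y i j) (dF i j)) -> is_derive x d F dF.
Proof.
move=> dFij; have dF_ex : derivable F x d.
  by apply/derivable_mxP => i j; case: (dFij i j).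
split => //; rewrite derive_mx //; apply/matrixP => i j.
by rewrite mxE derive_val.
Qed.

Lemma is_derive_bilin p1 q1 p2 q2 (W : normedModType R)
    (B : 'M[R]_(p1, q1) -> 'M[R]_(p2, q2) -> W)
    (f : V -> 'M[R]_(p1, q1)) (g : V -> 'M[R]_(p2, q2)) x d df dg :
  (forall a u v w, B (a *: u + v) w = a *: B u w + B v w) ->
  (forall a u v w, B u (a *: v + w) = a *: B u v + B u w) ->
  is_derive x d f df -> is_derive x d g dg ->
  is_derive x d (fun y => B (f y) (g y)) (B df (g x) + B (f x) dg).
Proof.
move=> BDZl BDZr f' g'; have expand := bilin_matrix_sum_delta BDZl BDZr.
have -> : (fun y => B (f y) (g y)) = \sum_i \sum_j \sum_k \sum_l
    (fun y => (f y i j * g y k l) *: B (delta_mx i j) (delta_mx k l)).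
  rewrite funeqE => y; rewrite expand fct_sumE.
  by do 3 (apply: eq_bigr => ? _; rewrite fct_sumE).
apply: is_derive_eq.
  apply: is_derive_sum => i; apply: is_derive_sum => j.
  apply: is_derive_sum => k; apply: is_derive_sum => l.
  apply: is_derive_scalel; apply: is_deriveM.
  - exact: is_derive_entry.
  - exact: is_derive_entry.
rewrite (expand df) (expand (f x)) -big_split; apply: eq_bigr => i _.
rewrite -big_split; apply: eq_bigr => j _.
rewrite -big_split; apply: eq_bigr => k _.
rewrite -big_split; apply: eq_bigr => l _.
rewrite /= -scalerDl addrC; congr (_ *: _); congr (_ + _); exact: mulrC.
Qed.

Lemma is_derive_scale_mx p q (r : V -> R) (F : V -> 'M[R]_(p, q)) x d dr dF :
  is_derive x d r dr -> is_derive x d F dF ->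
  is_derive x d (fun y => r y *: F y) (r x *: dF + dr *: F x).
Proof.
move=> r' F'; apply: is_derive_mx => i j.
have -> : (fun y => (r y *: F y) i j) = (fun y => r y * F y i j).
  by rewrite funeqE => y; rewrite mxE.
apply: is_derive_eq; first by apply: is_deriveM; last exact: is_derive_entry.
by rewrite !mxE [F x i j *: _]mulrC.
Qed.

End DirectionalDerivatives.

Lemma derive_basis_sum (R : realType) (n : nat) (W : normedModType R)
    (w : 'rV[R]_n -> W) y d :
  differentiable w y -> 'D_d w y = \sum_i d 0 i *: 'D_('e_i) w y.
Proof.
move=> dw; rewrite (deriveE d dw) {1}(row_sum_delta d) linear_sum.
by apply: eq_bigr => i _; rewrite linearZ (deriveE _ dw).
Qed.

Section PolynomialFunctions.
Variables (R : realType) (n : nat).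
Local Notation V := 'rV[R]_n.

Inductive polyfun : (V -> R) -> Prop :=
| polyfun_cst c : polyfun (fun _ => c)
| polyfun_coord i : polyfun (fun x => x 0 i)
| polyfun_add f g : polyfun f -> polyfun g -> polyfun (fun x => f x + g x)
| polyfun_mul f g : polyfun f -> polyfun g -> polyfun (fun x => f x * g x).

Lemma polyfun_ext f g : polyfun f -> f =1 g -> polyfun g.
Proof. by move=> pf /funext <-. Qed.

Lemma polyfun_differentiable f x : polyfun f -> differentiable f x.
Proof.
elim=> [c|i|f1 g1 _ IH1 _ IH2|f1 g1 _ IH1 _ IH2].
- exact: differentiable_cst.
- exact: differentiable_coord.
- exact: differentiableD.
- exact: differentiableM.
Qed.

Lemma polyfun_derive f d : polyfun f -> polyfun ('D_d f).
Proof.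
have D f' x : polyfun f' -> is_derive x d f' ('D_d f' x).
  by move=> pf; apply/derivableP/diff_derivable/polyfun_differentiable.
elim=> [c|i|f1 g1 p1 IH1 p2 IH2|f1 g1 p1 IH1 p2 IH2].
- apply: polyfun_ext (polyfun_cst 0) _ => x.
  by case: (is_derive_cst c x d).
- apply: polyfun_ext (polyfun_cst (d 0 i)) _ => x.
  by case: (is_derive_entry 0 i (is_derive_id x d)).
- apply: polyfun_ext (polyfun_add IH1 IH2) _ => x.
  by case: (is_deriveD (D _ x p1) (D _ x p2)).
- apply: polyfun_ext (polyfun_add (polyfun_mul p1 IH2) (polyfun_mul p2 IH1)) _ => x.
  by case: (is_deriveM (D _ x p1) (D _ x p2)).
Qed.

Lemma polyfun_smooth f (A : set V) : polyfun f -> smooth_on A f.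
Proof.
move=> pf vs x _; apply: polyfun_differentiable.
by elim: vs => [|v vs IH] //=; apply: polyfun_derive.
Qed.

Lemma polyfun_sum I (r : seq I) (P : pred I) (F : I -> V -> R) :
  (forall i, polyfun (F i)) -> polyfun (fun x => \sum_(i <- r | P i) F i x).
Proof.
move=> pF; elim: r => [|a r IH].
  by apply: polyfun_ext (polyfun_cst 0) _ => x; rewrite big_nil.
case Pa: (P a).
  by apply: polyfun_ext (polyfun_add (pF a) IH) _ => x; rewrite big_cons Pa.
by apply: polyfun_ext IH _ => x; rewrite big_cons Pa.
Qed.

Lemma polyfun_prod I (r : seq I) (P : pred I) (F : I -> V -> R) :
  (forall i, polyfun (F i)) -> polyfun (fun x => \prod_(i <- r | P i) F i x).
Proof.
move=> pF; elim: r => [|a r IH].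
  by apply: polyfun_ext (polyfun_cst 1) _ => x; rewrite big_nil.
case Pa: (P a).
  by apply: polyfun_ext (polyfun_mul (pF a) IH) _ => x; rewrite big_cons Pa.
by apply: polyfun_ext IH _ => x; rewrite big_cons Pa.
Qed.

Lemma polyfun_det m (M : V -> 'M[R]_m) :
  (forall i j, polyfun (fun y => M y i j)) -> polyfun (fun y => \det (M y)).
Proof.
move=> pM; apply: polyfun_sum => s.
by apply: polyfun_mul (polyfun_cst _) _; apply: polyfun_prod.
Qed.

Lemma polyfun_adj m (M : V -> 'M[R]_m) i j :
  (forall i j, polyfun (fun y => M y i j)) -> polyfun (fun y => \adj (M y) i j).
Proof.
move=> pM; apply: polyfun_ext (polyfun_mul (polyfun_cst ((-1) ^+ (j + i)))
  (polyfun_det (M := fun y => row' j (col' i (M y))) _)) _.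
  by move=> k l; apply: polyfun_ext (pM (lift j k) (lift i l)) _ => y; rewrite !mxE.
by move=> y; rewrite !mxE.
Qed.

Lemma polyfun_bilin p1 q1 p2 q2 (B : 'M[R]_(p1, q1) -> 'M[R]_(p2, q2) -> R)
    (f : V -> 'M[R]_(p1, q1)) (g : V -> 'M[R]_(p2, q2)) :
  (forall a u v w, B (a *: u + v) w = a *: B u w + B v w) ->
  (forall a u v w, B u (a *: v + w) = a *: B u v + B u w) ->
  (forall i j, polyfun (fun y => f y i j)) -> (forall k l, polyfun (fun y => g y k l)) ->
  polyfun (fun y => B (f y) (g y)).
Proof.
move=> BDZl BDZr pf pg.
apply: polyfun_ext (fun y => esym (bilin_matrix_sum_delta BDZl BDZr (f y) (g y))).
apply: polyfun_sum => i; apply: polyfun_sum => j.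
apply: polyfun_sum => k; apply: polyfun_sum => l.
exact: polyfun_mul (polyfun_mul (pf i j) (pg k l)) (polyfun_cst _).
Qed.

End PolynomialFunctions.

Arguments polyfun_cst {R n} c.
Arguments polyfun_coord {R n} i.

Section SymmetryOfSecondDerivatives.
Variables (R : realType) (V : normedModType R).

Lemma differential_remainder_le (W : normedModType R) (f : V -> W) x e :
  differentiable f x -> 0 < e -> exists2 del : R, 0 < del &
    forall z, `|z| < del -> `|f (z + x) - f x - 'd f x z| <= e * `|z|.
Proof.
move=> df e_gt0; have /eqaddoP/(_ e e_gt0)/nbhs_ballP[del del_gt0 rem] := diff_locally df.
exists del => // z z_lt; have := rem z; rewrite -ball_normE /= sub0r normrN.
by move=> /(_ z_lt) /=; rewrite opprD addrA.
Qed.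

Lemma differential_increment_le (f : V -> R) x e del z1 z2 :
  (forall z, `|z| < del -> `|f (z + x) - f x - 'd f x z| <= e * `|z|) ->
  `|z1| < del -> `|z2| < del ->
  `|f (z1 + x) - f (z2 + x) - 'd f x (z1 - z2)| <= e * (`|z1| + `|z2|).
Proof.
move=> rem z1_lt z2_lt; rewrite mulrDr.
have -> : f (z1 + x) - f (z2 + x) - 'd f x (z1 - z2)
    = (f (z1 + x) - f x - 'd f x z1) - (f (z2 + x) - f x - 'd f x z2).
  by rewrite linearB /=; ring.
by apply: le_trans (ler_normB _ _) _; apply: lerD; apply: rem.
Qed.

Lemma is_derive_along_line (f : V -> R) (a p : V) (s : R) :
  differentiable f (s *: a + p) ->
  is_derive s 1 (fun r => f (r *: a + p)) ('D_a f (s *: a + p)).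
Proof.
move=> df; have quotientE : (fun h : R => h^-1 *:
      (((fun r => f (r *: a + p)) \o shift s) (h *: 1) - f (s *: a + p)))
    = (fun h : R => h^-1 *: ((f \o shift (s *: a + p)) (h *: a) - f (s *: a + p))).
  by rewrite funeqE => h /=; rewrite [h *: 1]mulr1 scalerDl addrA.
split; last by rewrite /derive quotientE.
by rewrite /derivable quotientE; exact: diff_derivable.
Qed.

Definition second_difference (f : V -> R) (x a c : V) (t : R) :=
  f (t *: a + (t *: c + x)) - f (t *: a + x) - (f (t *: c + x) - f x).

Lemma second_differenceC f x a c t :
  second_difference f x a c t = second_difference f x c a t.
Proof. by rewrite /second_difference [t *: a + (t *: c + x)]addrCA; ring. Qed.

Lemma second_difference_mvt (f fa : V -> R) (U : set V) x a c t :
  0 < t -> (forall s k, 0 <= s <= t -> 0 <= k <= t -> U (s *: a + (k *: c + x))) ->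
  (forall y, U y -> differentiable f y) -> (forall y, U y -> 'D_a f y = fa y) ->
  exists2 s, 0 < s < t &
    second_difference f x a c t = t * (fa (s *: a + (t *: c + x)) - fa (s *: a + x)).
Proof.
move=> t_gt0 segU df Dfa; have t_ge0 := ltW t_gt0.
pose phi s := f (s *: a + (t *: c + x)) - f (s *: a + (0 *: c + x)).
pose dphi s := fa (s *: a + (t *: c + x)) - fa (s *: a + (0 *: c + x)).
have phi' s : 0 <= s <= t -> is_derive s 1 phi (dphi s).
  move=> s_in; have Ut := segU s t s_in; have U0 := segU s 0 s_in.
  rewrite /dphi -(Dfa _ (Ut _)) ?lexx ?t_ge0 // -(Dfa _ (U0 _)) ?lexx //.
  by apply: is_deriveB; apply: is_derive_along_line; apply: df;
    [apply: Ut | apply: U0]; rewrite ?lexx ?t_ge0.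
have [s s_in mvt] : exists2 s, s \in `]0, t[%R & phi t - phi 0 = dphi s * (t - 0).
  apply: (@MVT _ phi dphi _ _ t_gt0) => [s|].
    by rewrite in_itv /= => /andP[? ?]; apply: phi'; rewrite !ltW.
  apply: continuous_subspace_itv => s; rewrite in_itv /= => s_in.
  by apply/differentiable_continuous/derivable1_diffP; case: (phi' s s_in).
exists s; first by move: s_in; rewrite in_itv.
move: mvt; rewrite /phi /dphi /second_difference !scale0r !add0r.
by rewrite subr0 mulrC.
Qed.

Lemma second_difference_approx (f fa : V -> R) (U : set V) x a c e :
  open U -> U x -> (forall y, U y -> differentiable f y) ->
  (forall y, U y -> 'D_a f y = fa y) -> differentiable fa x -> 0 < e ->
  exists2 del : R, 0 < del & forall t, 0 < t < del ->
    `|second_difference f x a c t - t ^+ 2 * 'D_c fa x|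
      <= e * t ^+ 2 * (2 * `|a| + `|c|).
Proof.
move=> oU Ux df Dfa dfa e_gt0.
have [del1 del1_gt0 rem] := differential_remainder_le dfa e_gt0.
have /nbhs_ballP[r r_gt0 ballU] : nbhs x U by exact: open_nbhs_nbhs.
pose K := `|a| + `|c| + 1.
have K_gt0 : 0 < K by rewrite ltr_wpDl // addr_ge0.
exists (Num.min del1 r / K) => [|t /andP[t_gt0]].
  by rewrite divr_gt0 // lt_min del1_gt0.
rewrite ltr_pdivlMr // lt_min => /andP[tK_del1 tK_r]; have t_ge0 := ltW t_gt0.
have seg_le s k : 0 <= s <= t -> 0 <= k <= t -> `|s *: a + k *: c| <= t * (`|a| + `|c|).
  move=> /andP[s_ge0 s_le] /andP[k_ge0 k_le].
  rewrite (le_trans (ler_normD _ _)) // !normrZ !ger0_norm // mulrDr.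
  by rewrite lerD // ler_wpM2r.
have tK : t * (`|a| + `|c|) < t * K by rewrite ltr_pM2l // ltrDl.
have segU s k : 0 <= s <= t -> 0 <= k <= t -> U (s *: a + (k *: c + x)).
  move=> s_in k_in; apply: ballU; rewrite -ball_normE /= distrC addrA addrK.
  exact: le_lt_trans (seg_le s k s_in k_in) (lt_trans tK tK_r).
have [s /andP[s_gt0 s_lt] ->] := second_difference_mvt t_gt0 segU df Dfa.
set z1 := s *: a + t *: c; set z2 := s *: a.
have z1_le : `|z1| <= t * (`|a| + `|c|) by apply: seg_le; rewrite ?lexx ?t_ge0 ?ltW.
have z2_le : `|z2| <= t * `|a|.
  by rewrite normrZ ger0_norm ?(ltW s_gt0) // ler_wpM2r // ltW.
have z_lt (z : V) : `|z| <= t * (`|a| + `|c|) -> `|z| < del1.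
  by move=> /le_lt_trans; apply; exact: lt_trans tK tK_del1.
have z2_lt : `|z2| < del1.
  by apply: z_lt; rewrite (le_trans z2_le) // ler_wpM2l // lerDl.
have z1_lt := z_lt _ z1_le.
have Lz : 'd fa x (z1 - z2) = t * 'd fa x c.
  by rewrite /z1 /z2 [_ - s *: a]addrAC subrr add0r [LHS]linearZ.
rewrite (deriveE c dfa) addrA -/z1.
have -> : t * (fa (z1 + x) - fa (z2 + x)) - t ^+ 2 * 'd fa x c =
    t * (fa (z1 + x) - fa (z2 + x) - 'd fa x (z1 - z2)) by rewrite Lz; ring.
rewrite normrM ger0_norm //.
apply: le_trans (ler_wpM2l t_ge0 (differential_increment_le rem z1_lt z2_lt)) _.
apply: le_trans (ler_wpM2l t_ge0 (ler_wpM2l (ltW e_gt0) (lerD z1_le z2_le))) _.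
by rewrite [leRHS](_ : _ = t * (e * (t * (`|a| + `|c|) + t * `|a|))) //; ring.
Qed.

Lemma eq0_norm_le_eps (y M : R) : (forall e, 0 < e -> `|y| <= e * M) -> y = 0.
Proof.
move=> small; have M_ge0 : 0 <= M by rewrite -[M]mul1r (le_trans _ (small 1 ltr01)).
apply/normr0_eq0/eqP; rewrite eq_le normr_ge0 andbT.
apply/ler_addgt0Pr => e e_gt0; rewrite add0r.
have M1_gt0 : 0 < M + 1 by rewrite ltr_wpDl.
apply: le_trans (small (e / (M + 1)) _) _; first by rewrite divr_gt0.
by rewrite mulrAC ler_pdivrMr // ler_pM2l // lerDl.
Qed.

Lemma schwarz (f fa fc : V -> R) (U : set V) x a c :
  open U -> U x -> (forall y, U y -> differentiable f y) ->
  (forall y, U y -> 'D_a f y = fa y) -> (forall y, U y -> 'D_c f y = fc y) ->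
  differentiable fa x -> differentiable fc x ->
  'D_c fa x = 'D_a fc x.
Proof.
move=> oU Ux df Dfa Dfc dfa dfc; apply/eqP; rewrite -subr_eq0; apply/eqP.
apply: (@eq0_norm_le_eps _ (3 * (`|a| + `|c|))) => e e_gt0.
have [del1 del1_gt0 approx_ac] := second_difference_approx c oU Ux df Dfa dfa e_gt0.
have [del2 del2_gt0 approx_ca] := second_difference_approx a oU Ux df Dfc dfc e_gt0.
pose t := Num.min del1 del2 / 2.
have t_gt0 : 0 < t by rewrite divr_gt0 // lt_min del1_gt0.
have : t < Num.min del1 del2.
  by rewrite /t ltr_pdivrMr // ltr_pMr ?ltr1n // lt_min del1_gt0.
rewrite lt_min => /andP[t_del1 t_del2].
have := approx_ca t; rewrite t_gt0 t_del2 -second_differenceC => /(_ isT).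
have := approx_ac t; rewrite t_gt0 t_del1 => /(_ isT).
set D := second_difference f x a c t => close_ac close_ca.
rewrite -(ler_pM2l (exprn_gt0 2 t_gt0)) -[X in X * _](ger0_norm (ltW (exprn_gt0 2 t_gt0))).
rewrite -normrM (_ : _ * _ = (D - t ^+ 2 * 'D_a fc x) - (D - t ^+ 2 * 'D_c fa x)); last by ring.
apply: le_trans (ler_normB _ _) _; apply: le_trans (lerD close_ca close_ac) _.
by rewrite [leRHS](_ : _ = e * t ^+ 2 * (2 * `|c| + `|a|) + e * t ^+ 2 * (2 * `|a| + `|c|)) //; ring.
Qed.

End SymmetryOfSecondDerivatives.

Lemma schwarz_mx (R : realType) (V : normedModType R) p q (F : V -> 'M[R]_(p, q))
    (U : set V) x a c :
  open U -> U x -> (forall y, U y -> differentiable F y) ->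
  differentiable ('D_a F) x -> differentiable ('D_c F) x ->
  'D_c ('D_a F) x = 'D_a ('D_c F) x.
Proof.
move=> oU Ux dF dFa dFc.
have entry (G : V -> 'M[R]_(p, q)) y i j : differentiable G y ->
    differentiable (fun z => G z i j) y /\
    forall d, 'D_d G y i j = 'D_d (fun z => G z i j) y.
  move=> dG; split.
    have -> : (fun z => G z i j) = (fun N : 'M[R]_(p, q) => N i j) \o G by [].
    apply: differentiable_comp dG _; exact: differentiable_coord.
  by move=> d; rewrite derive_mx ?mxE //; exact: diff_derivable.
apply/matrixP => i j.
apply: etrans ((entry _ _ i j dFa).2 c) (etrans _ (esym ((entry _ _ i j dFc).2 a))).
apply: (schwarz (f := fun y => F y i j) (fa := fun y => 'D_a F y i j)
  (fc := fun y => 'D_c F y i j) oU Ux) => [y Uy|y Uy|y Uy||].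
- exact: (entry _ _ i j (dF y Uy)).1.
- exact: esym ((entry _ _ i j (dF y Uy)).2 a).
- exact: esym ((entry _ _ i j (dF y Uy)).2 c).
- exact: (entry _ _ i j dFa).1.
- exact: (entry _ _ i j dFc).1.
Qed.

Lemma is_derive_Dvf (R : realType) (n : nat) (v w : 'rV[R]_n -> 'rV[R]_n) x a :
  (\forall y \near x, differentiable w y) -> derivable v x a ->
  (forall i, derivable ('D_('e_i) w) x a) ->
  is_derive x a (Dvf v w) ('D_('D_a v x) w x + 'D_a ('D_(v x) w) x).
Proof.
move=> dw dv dDw; have dwx : differentiable w x := nbhs_singleton dw.
have expansion (v' : 'rV[R]_n -> 'rV[R]_n) : derivable v' x a ->
    is_derive x a (Dvf v' w) (\sum_i ((v' x) 0 i *: 'D_a ('D_('e_i) w) x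
                                      + ('D_a v' x) 0 i *: 'D_('e_i) w x)).
  move=> dv'; apply: (near_eq_is_derive (f := \sum_i (fun y => (v' y) 0 i *: 'D_('e_i) w y))).
    apply: filterS dw => y dwy.
    by rewrite fct_sumE /Dvf (derive_basis_sum (v' y) dwy).
  apply: is_derive_sum => i.
  apply: (@is_derive_scale_mx _ _ _ _ (fun y => v' y 0 i) ('D_('e_i) w)).
    exact: is_derive_entry (derivableP dv').
  exact: derivableP (dDw i).
(* for the constant field [v x] the expansion computes [D_a (D_(v x) w) x] *)
have := expansion (cst (v x)) (derivable_cst _ _ _).
rewrite derive_cst => -[_ Dconst].
apply: is_derive_eq (expansion v dv) _.
rewrite big_split addrC (derive_basis_sum ('D_a v x) dwx) /=; congr (_ + _).
apply: etrans (esym Dconst); apply: eq_bigr => i _.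
by rewrite mxE scale0r addr0.
Qed.

Section LeviCivitaConnection.
Variables (R : realType) (n : nat).
Local Notation V := 'rV[R]_n.
Variables (b : V -> V -> R) (J : V -> V -> 'M[R]_n).
Hypotheses (hb : nondeg_sym_bilinear b) (hJ : metric_alg_Jacobi b J).

Lemma bDZl a u v w : b (a *: u + v) w = a *: b u w + b v w.
Proof. by case: hb => ->. Qed.

Lemma bC u v : b u v = b v u.
Proof. by case: hb. Qed.

Lemma bDZr a u v w : b u (a *: v + w) = a *: b u v + b u w.
Proof. by rewrite bC bDZl (bC v) (bC w). Qed.

Lemma JDZl a u v w : J (a *: u + v) w = a *: J u w + J v w.
Proof. by case: hJ => -[-> _]. Qed.

Lemma JDZr a u v w : J u (a *: v + w) = a *: J u v + J u w.
Proof. by case: hJ => -[_ ->]. Qed.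

Lemma JC u v : J u v = J v u.
Proof. by case: hJ. Qed.

Lemma J_Bianchi u v w : w *m J u v + u *m J v w + v *m J w u = 0.
Proof. by case: hJ. Qed.

Lemma J_metric u v w x : b (w *m J u v) x = b (u *m J w x) v.
Proof. by case: hJ. Qed.

Lemma Gop0 : Gop J 0 = 1%:M.
Proof. by rewrite /Gop (bilin0l JDZl) scaler0 subr0. Qed.

Lemma UJ0 : UJ J 0.
Proof. by rewrite /UJ /= Gop0 unitmx1. Qed.

Lemma polyfun_Gop i j : polyfun (fun x => Gop J x i j).
Proof.
have polyJ : polyfun (fun x : V => J x x i j).
  have coord k l : polyfun (fun x : V => x k l).
    by apply: polyfun_ext (polyfun_coord l) _ => x; rewrite [k]ord1.
  by apply: (polyfun_bilin (B := fun u v => J u v i j)) => // a u v w;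
    rewrite ?JDZl ?JDZr !mxE.
apply: polyfun_ext (polyfun_add (polyfun_cst ((1%:M : 'M[R]_n) i j))
  (polyfun_mul (polyfun_cst (- 3%:R^-1)) polyJ)) _ => x.
by rewrite /Gop !mxE mulNr.
Qed.

Lemma open_UJ : open (UJ J).
Proof.
have -> : UJ J = (fun x => \det (Gop J x)) @^-1` [set r : R | r != 0].
  by rewrite funeqE => x; rewrite /UJ /= unitmxE unitfE.
apply: open_comp; last exact: open_neq.
move=> x _; apply/differentiable_continuous/polyfun_differentiable.
exact/polyfun_det/polyfun_Gop.
Qed.

Lemma Gop_selfadjoint x u v : b (u *m Gop J x) v = b (v *m Gop J x) u.
Proof.
have bJJ : b (u *m J x x) v = b (v *m J x x) u.
  by rewrite [LHS]J_metric [RHS]J_metric JC.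
by rewrite /Gop !mulmxBr !mulmx1 -!scalemxAr !(bilinBl bDZl) !(bilinZl bDZl) bJJ bC.
Qed.

Lemma gmet_nondeg x : UJ J x -> nondeg_sym_bilinear (gmet b J x).
Proof.
move=> Ux; split=> [a u v w|u v|u gu0]; rewrite /gmet.
- by rewrite mulmxDZl bDZl.
- exact: Gop_selfadjoint.
- have uG0 : u *m Gop J x = 0 by case: hb => _ _; apply.
  by rewrite -(mulmxK Ux u) uG0 mul0mx.
Qed.

Lemma polyfun_gmet u v : polyfun (fun x => gmet b J x u v).
Proof.
apply: (polyfun_bilin (B := b)) => [||i j|k l]; [exact: bDZl|exact: bDZr| |].
  apply: polyfun_ext (polyfun_sum _ _ (fun k => polyfun_mul
    (polyfun_cst (u i k)) (polyfun_Gop k j))) _ => x.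
  by rewrite mxE.
exact: polyfun_cst.
Qed.

Lemma nablaJ_torsion_free u v x : nablaJ J u v x - nablaJ J v u x = bracket u v x.
Proof. by rewrite /nablaJ /bracket JC opprD addrACA subrr addr0. Qed.

Lemma is_derive_Gop x d : is_derive x d (Gop J) (- (3%:R^-1 *: (J d x + J x d))).
Proof.
have -> : Gop J = cst 1%:M - 3%:R^-1 \*: (fun x => J x x) by [].
apply: is_derive_eq.
  apply: is_deriveB; apply: is_deriveZ; apply: (is_derive_bilin JDZl JDZr);
    exact: is_derive_id.
by rewrite sub0r.
Qed.

Lemma nablaJ_metric (u v w : V -> V) x :
  UJ J x -> differentiable v x -> differentiable w x ->
  'D_(u x) (fun y => gmet b J y (v y) (w y)) x
    = gmet b J x (nablaJ J u v x) (w x) + gmet b J x (v x) (nablaJ J u w x).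
Proof.
move=> Ux dv dw; set d := u x.
have dvG := is_derive_bilin (@mulmxDZl _ _ _ _) (@mulmxDZr _ _ _ _)
  (derivableP (diff_derivable (v:=d) dv)) (is_derive_Gop x d).
have [_ ->] := is_derive_bilin bDZl bDZr dvG (derivableP (diff_derivable (v:=d) dw)).
rewrite /gmet /nablaJ /Dvf -/d.
set G := Gop J x.
rewrite mulmxDl -scalemxAl (mulmxKV Ux).
rewrite !(bilinDl bDZl) (bilinZl bDZl) (bilinDr bDZr) (bilinZr bDZr).
rewrite [b (v x *m G) (_ *m _)]Gop_selfadjoint (mulmxKV Ux) (J_metric d (w x) x (v x)).
rewrite mulmxN -scalemxAr mulmxDr (JC d x) (bilinNl bDZl) (bilinZl bDZl) (bilinDl bDZl).
(* the Bianchi identity relates the three [b (_ *m J _ _) (w x)] terms *)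
have := congr1 (b^~ (w x)) (J_Bianchi x d (v x)).
rewrite /= !(bilinDl bDZl) (bilin0l bDZl) (JC (v x) x).
rewrite [v x *m (_ + _)]mulmxDr (bilinDl bDZl).
rewrite /GRing.scale /=; lra.
Qed.

Lemma nbhs_UJ x : UJ J x -> \forall y \near x, UJ J y.
Proof. by move=> Ux; apply: open_nbhs_nbhs; split; [exact: open_UJ|]. Qed.

Lemma derivable_invmx_Gop a x : UJ J x -> derivable (fun y => invmx (Gop J y)) x a.
Proof.
move=> Ux; apply: (near_eq_derivable
  (f := fun y => (\det (Gop J y))^-1 *: \adj (Gop J y))).
  by apply: filterS (nbhs_UJ Ux) => y Uy; rewrite /invmx Uy.
apply/derivable_mxP => i j.
have -> : (fun y => ((\det (Gop J y))^-1 *: \adj (Gop J y)) i j)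
    = (fun y => (\det (Gop J y))^-1 * \adj (Gop J y) i j).
  by rewrite funeqE => y; rewrite mxE.
apply: derivableM.
  apply: derivableV; first by rewrite -unitfE -unitmxE.
  exact/diff_derivable/polyfun_differentiable/polyfun_det/polyfun_Gop.
exact/diff_derivable/polyfun_differentiable/polyfun_adj/polyfun_Gop.
Qed.

Lemma nablaJ0 u v : nablaJ J u v 0 = 'D_(u 0) v 0.
Proof. by rewrite /nablaJ /Dvf !mul0mx scaler0 addr0. Qed.

Lemma is_derive_nablaJ0 (v w : V -> V) a :
  smooth_on (UJ J) v -> smooth_on (UJ J) w ->
  is_derive 0 a (nablaJ J v w)
    ('D_('D_a v 0) w 0 + 'D_a ('D_(v 0) w) 0 + (2%:R / 3%:R) *: (a *m J (v 0) (w 0))).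
Proof.
move=> sv sw.
have dv : derivable v 0 a := diff_derivable (v:=a) (sv [::] 0 UJ0).
have dw : derivable w 0 a := diff_derivable (v:=a) (sw [::] 0 UJ0).
apply: is_deriveD.
  apply: is_derive_Dvf dv (fun i => diff_derivable (v:=a) (sw [:: 'e_i] 0 UJ0)).
  exact: filterS (fun y Uy => sw [::] y Uy) (nbhs_UJ UJ0).
(* at [y = 0] only the derivative of the factor [y] of the correction survives *)
have dxJ := is_derive_bilin (@mulmxDZl _ _ _ _) (@mulmxDZr _ _ _ _) (is_derive_id 0 a)
  (is_derive_bilin JDZl JDZr (derivableP dv) (derivableP dw)).
apply: is_derive_eq; first apply: is_deriveZ.
  exact: is_derive_bilin (@mulmxDZl _ _ _ _) (@mulmxDZr _ _ _ _) dxJ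
    (derivableP (derivable_invmx_Gop (a := a) UJ0)).
by rewrite !mul0mx !addr0 Gop0 invmx1 mulmx1.
Qed.

Lemma Rcurv_nablaJ0 (u v w : V -> V) :
  smooth_on (UJ J) u -> smooth_on (UJ J) v -> smooth_on (UJ J) w ->
  Rcurv (nablaJ J) u v w 0 = RJ J (u 0) (v 0) (w 0).
Proof.
move=> su sv sw; have dw0 : differentiable w 0 := sw [::] 0 UJ0.
have D2w_sym : 'D_(u 0) ('D_(v 0) w) 0 = 'D_(v 0) ('D_(u 0) w) 0.
  exact: schwarz_mx open_UJ UJ0 (fun y Uy => sw [::] y Uy)
    (sw [:: v 0] 0 UJ0) (sw [:: u 0] 0 UJ0).
have bracket0 : 'D_(bracket u v 0) w 0 = 'D_('D_(u 0) v 0) w 0 - 'D_('D_(v 0) u 0) w 0.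
  by rewrite !(deriveE _ dw0) /bracket linearB.
rewrite /Rcurv !nablaJ0.
have [_ ->] := is_derive_nablaJ0 (u 0) sv sw.
have [_ ->] := is_derive_nablaJ0 (v 0) su sw.
rewrite bracket0 D2w_sym.
have regroup (M : zmodType) (A A' S C C' : M) :
    (A + S + C) - (A' + S + C') - (A - A') = C - C'.
  rewrite (addrAC A) (addrAC A') opprD addrACA subrr addr0 opprD addrACA.
  by rewrite (addrC (A - A')) addrK.
by apply: etrans (regroup _ _ _ _ _ _) _; rewrite /RJ scalerBr !(JC (w 0)).
Qed.

Lemma Jcurv_nablaJ0 (u v w : V -> V) :
  smooth_on (UJ J) u -> smooth_on (UJ J) v -> smooth_on (UJ J) w ->
  Jcurv (nablaJ J) u v w 0 = w 0 *m J (u 0) (v 0).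
Proof.
move=> su sv sw.
rewrite /Jcurv !Rcurv_nablaJ0 // /RJ (JC (v 0) (u 0)) (JC (u 0) (w 0)).
have := J_Bianchi (u 0) (v 0) (w 0).
set X := w 0 *m _; set Y := u 0 *m _; set Z := v 0 *m _ => XYZ.
have -> : Z = - (X + Y) by apply: (addrI (X + Y)); rewrite XYZ subrr.
rewrite -scalerDr opprK scalerA.
have -> : X + (X + Y) + (X - Y) = 3%:R *: X.
  by rewrite scaler_nat !mulrS mulr0n addr0 [X - Y]addrC !addrA addrK.
rewrite scalerA (_ : 2%:R^-1 * (2%:R / 3%:R) * 3%:R = 1 :> R) ?scale1r //.
by rewrite mulrA mulVf ?pnatr_eq0 // mul1r mulVf ?pnatr_eq0.
Qed.

End LeviCivitaConnection.

Theorem mainTheorem18 (R : realType) (n : nat)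
  (b : 'rV[R]_n -> 'rV[R]_n -> R) (J : 'rV[R]_n -> 'rV[R]_n -> 'M[R]_n) :
  nondeg_sym_bilinear b -> metric_alg_Jacobi b J ->
  let U := UJ J in
  let g := gmet b J in
  let nab := nablaJ J in
  (open U /\ U 0) /\
  [/\ (forall x, U x -> nondeg_sym_bilinear (g x)),
      (forall u v : 'rV[R]_n, smooth_on U (fun x => g x u v))
    & (forall u v, g 0 u v = b u v)] /\
  [/\
      (forall u v : 'rV[R]_n -> 'rV[R]_n, smooth_on U u -> smooth_on U v ->
         forall x, U x -> nab u v x - nab v u x = bracket u v x),
      (forall u v w : 'rV[R]_n -> 'rV[R]_n,
         smooth_on U u -> smooth_on U v -> smooth_on U w ->
         forall x, U x ->
           'D_(u x) (fun y => g y (v y) (w y)) x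
             = g x (nab u v x) (w x) + g x (v x) (nab u w x)),
      (forall u v w : 'rV[R]_n -> 'rV[R]_n,
         smooth_on U u -> smooth_on U v -> smooth_on U w ->
         Rcurv nab u v w 0 = RJ J (u 0) (v 0) (w 0))
    & (forall u v w : 'rV[R]_n -> 'rV[R]_n,
         smooth_on U u -> smooth_on U v -> smooth_on U w ->
         Jcurv nab u v w 0 = w 0 *m J (u 0) (v 0))].
Proof.
move=> hb hJ U g nab; subst U g nab.
split; first by split; [exact: (open_UJ hJ) | exact: (UJ0 hJ)].
split; first split.
- exact: (gmet_nondeg hb hJ).
- by move=> u v; apply/polyfun_smooth/(polyfun_gmet hb hJ).
- by move=> u v; rewrite /gmet (Gop0 hJ) mulmx1.
split.
- by move=> u v _ _ x _; exact: (nablaJ_torsion_free hJ).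
- move=> u v w _ sv sw x Ux.
  exact: (nablaJ_metric hb hJ u Ux (sv [::] x Ux) (sw [::] x Ux)).
- exact: (Rcurv_nablaJ0 hJ).
- exact: (Jcurv_nablaJ0 hJ).
Qed.
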